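(* Let $A,M\in\mathbb{C}^{n\times n}$ be Hermitian with $M$ positive definite, and let the eigenvalues of the pair $(A,M)$ be $\lambda_1<\lambda_2\le\cdots\le\lambda_n$, with $\mathcal{X}_1$ the eigenspace associated with $\lambda_1$. Put $A_{\lambda_1}=A-\lambda_1 M$. Let $T\in\mathbb{C}^{n\times n}$ be Hermitian positive definite. Let $x^{(0)}\in\mathbb{C}^n$ be neither an eigenvector of $(A,M)$ associated with $\lambda_1$ nor $M$-orthogonal to $\mathcal{X}_1$, and let $x^{(0)},x^{(1)},\ldots$ be the iterates of the following heuristic preconditioned CG iteration (for as long as it is defined): set $r^{(0)}=-A_{\lambda_1}x^{(0)}$, $\gamma^{(0)}=(Tr^{(0)})^*r^{(0)}$, $p^{(0)}=Tr^{(0)}$, and for $i=0,1,\ldots$: $w=A_{\lambda_1}p^{(i)}$, $\delta=\gamma^{(i)}/(w^*p^{(i)})$, $x^{(i+1)}=x^{(i)}+\delta p^{(i)}$, $r^{(i+1)}=r^{(i)}-\delta w$, $\gamma^{(i+1)}=(Tr^{(i+1)})^*r^{(i+1)}$, $p^{(i+1)}=Tr^{(i+1)}+(\gamma^{(i+1)}/\gamma^{(i)})p^{(i)}$. Then for every $i$, $x^{(i)}-x^{(0)}$ is $T^{-1}$-orthogonal to $\mathcal{X}_1$ (i.e. $y^*T^{-1}(x^{(i)}-x^{(0)})=0$ for all $y\in\mathcal{X}_1$), and $$\|x^{(i)}\|_M^2\ge\mu_1\|x^{(0)}\|_{T^{-1}}^2\big(\cos\angle_{T^{-1}}(x^{(0)},\mathcal{X}_1)\big)^2,$$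 where $\mu_1$ is the smallest eigenvalue of the matrix pair $(M,T^{-1})$.
   Context: $\|y\|_M=(y^*My)^{1/2}$, $\|y\|_{T^{-1}}=(y^*T^{-1}y)^{1/2}$. $\angle_{T^{-1}}(x,\mathcal{X}_1)$ is the angle between the vector $x$ and the subspace $\mathcal{X}_1$ with respect to the inner product $(u,v)\mapsto u^*T^{-1}v$, i.e. $\cos\angle_{T^{-1}}(x,\mathcal{X}_1)=\max_{y\in\mathcal{X}_1\setminus\{0\}}|y^*T^{-1}x|/(\|y\|_{T^{-1}}\|x\|_{T^{-1}})$. *)

(* Complex numbers: an arbitrary numClosedFieldType C
   (e.g. algC, or complex R for a real closed field R). *)
From HB Require Import structures.
From mathcomp Require Import all_boot all_order all_algebra.
Set Implicit Arguments. Unset Strict Implicit. Unset Printing Implicit Defensive.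
Import Order.TTheory GRing.Theory Num.Theory.
Local Open Scope ring_scope.

Section Defs.
Variables (C : numClosedFieldType) (n : nat).

Definition adj (m k : nat) (B : 'M[C]_(m, k)) : 'M[C]_(k, m) := map_mx Num.conj (B^T).

Definition sform (B : 'M[C]_n) (y x : 'cV[C]_n) : C := (adj y *m B *m x) 0 0.

Definition hermitian_mx (B : 'M[C]_n) : Prop := adj B = B.

Definition posdef_mx (B : 'M[C]_n) : Prop :=
  hermitian_mx B /\ forall x : 'cV[C]_n, x != 0 -> 0 < sform B x x.

Definition pair_charpoly (A M : 'M[C]_n) : {poly C} :=
  \det (map_mx polyC A - 'X *: map_mx polyC M).

Definition pair_eigenvalue (A M : 'M[C]_n) (l : C) : Prop :=
  root (pair_charpoly A M) l.

Definition smallest_pair_eigenvalue (A M : 'M[C]_n) (l : C) : Prop :=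
  pair_eigenvalue A M l /\ forall l', pair_eigenvalue A M l' -> l <= l'.

Definition simple_pair_eigenvalue (A M : 'M[C]_n) (l : C) : Prop :=
  root (pair_charpoly A M) l /\
  ~~ root (pair_charpoly A M %/ ('X - l%:P)) l.

Definition pair_eigenspace (A M : 'M[C]_n) (l : C) (x : 'cV[C]_n) : Prop :=
  A *m x = l *: (M *m x).

Record cg_state := CGState { cg_x : 'cV[C]_n; cg_r : 'cV[C]_n;
                             cg_gamma : C; cg_p : 'cV[C]_n }.

Definition cg_init (Al T : 'M[C]_n) (x0 : 'cV[C]_n) : cg_state :=
  let r0 := - (Al *m x0) in
  CGState x0 r0 ((adj (T *m r0) *m r0) 0 0) (T *m r0).

Definition cg_w (Al : 'M[C]_n) (s : cg_state) : 'cV[C]_n := Al *m cg_p s.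

Definition cg_den (Al : 'M[C]_n) (s : cg_state) : C :=
  (adj (cg_w Al s) *m cg_p s) 0 0.

Definition cg_step (Al T : 'M[C]_n) (s : cg_state) : cg_state :=
  let w := cg_w Al s in
  let delta := cg_gamma s / cg_den Al s in
  let x' := cg_x s + delta *: cg_p s in
  let r' := cg_r s - delta *: w in
  let gamma' := (adj (T *m r') *m r') 0 0 in
  let p' := T *m r' + (gamma' / cg_gamma s) *: cg_p s in
  CGState x' r' gamma' p'.

Fixpoint cg_iter (Al T : 'M[C]_n) (x0 : 'cV[C]_n) (i : nat) : cg_state :=
  match i with
  | 0 => cg_init Al T x0
  | i'.+1 => cg_step Al T (cg_iter Al T x0 i')
  end.

(* x^{(i)} is defined: every division performed to compute it has a
   nonzero denominator *)
Definition cg_defined (Al T : 'M[C]_n) (x0 : 'cV[C]_n) (i : nat) : Prop :=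
  forall j, (j < i)%N ->
    cg_den Al (cg_iter Al T x0 j) != 0 /\
    ((j.+1 < i)%N -> cg_gamma (cg_iter Al T x0 j) != 0).

(* c = cos of the angle, w.r.t. the inner product (u,v) |-> u^* B v, between
   x and the subspace X, defined as a maximum over X \ {0} *)
Definition cos_angle_ratio (B : 'M[C]_n) (x y : 'cV[C]_n) : C :=
  `|sform B y x| / (sqrtC (sform B y y) * sqrtC (sform B x x)).

Definition is_cos_angle (B : 'M[C]_n) (x : 'cV[C]_n) (X : 'cV[C]_n -> Prop)
  (c : C) : Prop :=
  (exists2 y, X y /\ y != 0 & cos_angle_ratio B x y = c) /\
  (forall y, X y -> y != 0 -> cos_angle_ratio B x y <= c).

End Defs.

(** Every CG update keeps [x - x0] and the search direction [p] in the range of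
    [T A_l1] and the residual [r] in the range of [A_l1].  As [A_l1] is Hermitian
    and annihilates [X1], every vector [T A_l1 w] is [T^-1]-orthogonal to [X1],
    whence the first claim.  For the bound, a simultaneous diagonalisation of the
    pair [(M, T^-1)] gives [||x||_M^2 >= mu1 ||x||_{T^-1}^2].  If [y] in [X1]
    attains the cosine, then [y^* T^-1 x = y^* T^-1 x0] by the first claim, and
    Cauchy-Schwarz gives [||x||_{T^-1}^2 >= |y^* T^-1 x0|^2 / ||y||_{T^-1}^2
    = ||x0||_{T^-1}^2 cos^2]. *)

From HB Require Import structures.
From mathcomp Require Import all_boot all_order all_algebra.
From mathcomp Require Import ring.
Set Implicit Arguments. Unset Strict Implicit. Unset Printing Implicit Defensive.
Import Order.TTheory GRing.Theory Num.Theory.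
Local Open Scope ring_scope.

Section Adjoint.
Variable C : numClosedFieldType.

Lemma adjmxM m k p (A : 'M[C]_(m, k)) (B : 'M[C]_(k, p)) :
  adj (A *m B) = adj B *m adj A.
Proof. by rewrite /adj trmx_mul map_mxM. Qed.

Lemma adjmxK m k (A : 'M[C]_(m, k)) : adj (adj A) = A.
Proof. exact: trmxCK. Qed.

Lemma adjmxD m k (A B : 'M[C]_(m, k)) : adj (A + B) = adj A + adj B.
Proof. by apply/matrixP => i j; rewrite !mxE rmorphD. Qed.

Lemma adjmxN m k (A : 'M[C]_(m, k)) : adj (- A) = - adj A.
Proof. by apply/matrixP => i j; rewrite !mxE rmorphN. Qed.

Lemma adjmxB m k (A B : 'M[C]_(m, k)) : adj (A - B) = adj A - adj B.
Proof. by rewrite adjmxD adjmxN. Qed.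

Lemma adjmxZ m k a (A : 'M[C]_(m, k)) : adj (a *: A) = a^* *: adj A.
Proof. by apply/matrixP => i j; rewrite !mxE rmorphM. Qed.

Lemma adjmx0 m k : adj (0 : 'M[C]_(m, k)) = 0.
Proof. by apply/matrixP => i j; rewrite !mxE rmorph0. Qed.

Lemma adjmx1 k : adj (1%:M : 'M[C]_k) = 1%:M.
Proof. by apply/matrixP => i j; rewrite !mxE rmorphMn rmorph1 eq_sym. Qed.

Lemma adjmx_diag k (d : 'rV[C]_k) : adj (diag_mx d) = diag_mx (map_mx Num.conj d).
Proof. by apply/matrixP => i j; rewrite !mxE rmorphMn eq_sym; case: eqP => [->|]. Qed.

Lemma adjmx_inv k (A : 'M[C]_k) : adj (invmx A) = invmx (adj A).
Proof.
rewrite /adj trmx_inv; case: k A => [|k] A; first by rewrite !thinmx0.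
by rewrite map_mx_inv.
Qed.

Lemma det_adjmx k (A : 'M[C]_k) : \det (adj A) = (\det A)^*.
Proof. by rewrite /adj det_map_mx det_tr. Qed.

Lemma conj_mulmx00 k (A : 'M[C]_(1, k)) (B : 'M[C]_(k, 1)) :
  ((A *m B) 0 0)^* = (adj B *m adj A) 0 0.
Proof. by rewrite -adjmxM !mxE. Qed.

Lemma unitary_adjmxK k (P : 'M[C]_k) : P \is unitarymx -> adj P *m P = 1%:M.
Proof.
by move=> Pu; rewrite -[adj P]invmx_unitary // mulVmx // unitarymx_unit.
Qed.

Lemma hermitian_spectral k (B : 'M[C]_k) : hermitian_mx B ->
  B = adj (spectralmx B) *m diag_mx (spectral_diag B) *m spectralmx B.
Proof.
move=> hB; have hsB : B \is hermsymmx.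
  by apply/is_hermitianmxP; rewrite expr0 scale1r; exact/esym.
have /hermitian_normalmx/orthomx_spectralP {1}-> := hsB.
by rewrite invmx_unitary ?spectral_unitarymx.
Qed.

End Adjoint.

Section SesquilinearForm.
Context {C : numClosedFieldType} {n : nat}.
Implicit Types (B P T : 'M[C]_n) (x y : 'cV[C]_n).

Lemma sformDr B y x1 x2 : sform B y (x1 + x2) = sform B y x1 + sform B y x2.
Proof. by rewrite /sform mulmxDr mxE. Qed.

Lemma sformZr B y a x : sform B y (a *: x) = a * sform B y x.
Proof. by rewrite /sform -scalemxAr mxE. Qed.

Lemma sformNr B y x : sform B y (- x) = - sform B y x.
Proof. by rewrite /sform mulmxN mxE. Qed.

Lemma sformBr B y x1 x2 : sform B y (x1 - x2) = sform B y x1 - sform B y x2.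
Proof. by rewrite sformDr sformNr. Qed.

Lemma sformDl B y1 y2 x : sform B (y1 + y2) x = sform B y1 x + sform B y2 x.
Proof. by rewrite /sform adjmxD !mulmxDl mxE. Qed.

Lemma sformZl B a y x : sform B (a *: y) x = a^* * sform B y x.
Proof. by rewrite /sform adjmxZ -!scalemxAl mxE. Qed.

Lemma sformNl B y x : sform B (- y) x = - sform B y x.
Proof. by rewrite /sform adjmxN !mulNmx mxE. Qed.

Lemma sformBl B y1 y2 x : sform B (y1 - y2) x = sform B y1 x - sform B y2 x.
Proof. by rewrite sformDl sformNl. Qed.

Lemma sform0l B x : sform B 0 x = 0.
Proof. by rewrite /sform adjmx0 !mul0mx mxE. Qed.

Lemma sform_adj B y x : (sform B y x)^* = sform (adj B) x y.
Proof. by rewrite /sform conj_mulmx00 !adjmxM adjmxK mulmxA. Qed.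

Lemma sform_hermC B y x : hermitian_mx B -> (sform B y x)^* = sform B x y.
Proof. by move=> hB; rewrite sform_adj hB. Qed.

Lemma sform_real B x : hermitian_mx B -> sform B x x \is Num.real.
Proof. by move=> hB; apply/CrealP; rewrite sform_hermC. Qed.

Lemma sform_congruence B P y x :
  sform (adj P *m B *m P) y x = sform B (P *m y) (P *m x).
Proof. by rewrite /sform adjmxM !mulmxA. Qed.

Lemma sform_invmx_mul T B y x :
  T \in unitmx -> sform (invmx T) y (T *m (B *m x)) = sform B y x.
Proof. by move=> Tu; rewrite /sform !mulmxA mulmxKV. Qed.

Lemma sform_kerl B y x : hermitian_mx B -> B *m y = 0 -> sform B y x = 0.
Proof.
by move=> hB By0; rewrite -sform_hermC // /sform -mulmxA By0 mulmx0 mxE conjC0.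
Qed.

Lemma sform_diag (d : 'rV[C]_n) x :
  sform (diag_mx d) x x = \sum_i d 0 i * `|x i 0| ^+ 2.
Proof.
rewrite /sform mul_mx_diag mxE; apply: eq_bigr => i _.
by rewrite !mxE normCKC mulrAC mulrC mulrA.
Qed.

Lemma sform_diag_delta (d : 'rV[C]_n) k :
  sform (diag_mx d) (delta_mx k 0) (delta_mx k 0) = d 0 k.
Proof.
rewrite sform_diag (bigD1 k) //= big1 ?addr0.
  by rewrite !mxE !eqxx normr1 expr1n mulr1.
by move=> j /negbTE jk; rewrite !mxE jk /= normr0 expr0n /= mulr0.
Qed.

End SesquilinearForm.

Section PositiveDefinite.
Context {C : numClosedFieldType} {n : nat}.
Implicit Types (B S T : 'M[C]_n) (x y : 'cV[C]_n).

Lemma posdef_sform_ge0 B x : posdef_mx B -> 0 <= sform B x x.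
Proof.
move=> [_ pB]; have [->|xnz] := eqVneq x 0; first by rewrite sform0l.
exact/ltW/pB.
Qed.

Lemma posdef_mx_unit T : posdef_mx T -> T \in unitmx.
Proof.
move=> [_ pT]; rewrite unitmxE unitfE -det_tr; apply/negP => /det0P [v vnz vT].
have vTnz : v^T != 0 by apply: contra vnz => /eqP v0; rewrite -[v]trmxK v0 trmx0.
have := pT _ vTnz; rewrite /sform -mulmxA.
have -> : T *m v^T = 0 by rewrite -[T]trmxK -trmx_mul vT trmx0.
by rewrite mulmx0 mxE ltxx.
Qed.

Lemma posdef_invmx T : posdef_mx T -> posdef_mx (invmx T).
Proof.
move=> pdT; have Tu := posdef_mx_unit pdT; case: pdT => hT pT; split.
  by rewrite /hermitian_mx adjmx_inv hT.
move=> x xnz; have TTx : T *m (invmx T *m x) = x by rewrite mulKVmx.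
have Txnz : invmx T *m x != 0 by apply: contra xnz => /eqP u0; rewrite -TTx u0 mulmx0.
by rewrite -TTx -sform_congruence hT mulmxKV //; exact: pT.
Qed.

Lemma posdef_congr_diag_gt0 S (e : 'rV[C]_n) :
  S \in unitmx -> posdef_mx (adj S *m diag_mx e *m S) -> forall i, 0 < e 0 i.
Proof.
move=> Su [_ pE] i; pose ei : 'cV[C]_n := delta_mx i 0.
have SSe : S *m (invmx S *m ei) = ei by rewrite mulKVmx.
have Senz : invmx S *m ei != 0.
  apply: contraTneq isT => Se0; move: SSe; rewrite Se0 mulmx0 => /matrixP/(_ i 0).
  by rewrite !mxE !eqxx => /eqP; rewrite eq_sym oner_eq0.
by have := pE _ Senz; rewrite sform_congruence SSe sform_diag_delta.
Qed.

Lemma sform_cauchy_schwarz B x y : posdef_mx B ->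
  `|sform B y x| ^+ 2 <= sform B y y * sform B x x.
Proof.
move=> pdB; have [->|ynz] := eqVneq y 0; first by rewrite !sform0l normr0 expr0n mul0r.
have hB := pdB.1; have s_gt0 := pdB.2 y ynz.
set s := sform B y y; set t := sform B y x; set X := sform B x x.
have := posdef_sform_ge0 (s *: x - t *: y) pdB.
rewrite !(sformBl, sformBr, sformZl, sformZr) -/s -/t -/X.
have -> : sform B x y = t^* by rewrite /t sform_hermC.
have -> : s^* = s by apply/CrealP; rewrite /s sform_real.
have -> : s * (s * X - t * t^*) - t^* * (s * t - t * s) = s * (s * X - t * t^*).
  by ring.
by rewrite pmulr_rge0 // subr_ge0 normCK.
Qed.

Lemma sqr_cos_angle_ratio_le B x0 x y : posdef_mx B -> y != 0 ->
  sform B y x = sform B y x0 ->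
  sform B x0 x0 * cos_angle_ratio B x0 y ^+ 2 <= sform B x x.
Proof.
move=> pdB ynz yx_x0; set a := sform B x0 x0.
have [->|anz] := eqVneq a 0; first by rewrite mul0r posdef_sform_ge0.
have s_gt0 := pdB.2 y ynz; set s := sform B y y in s_gt0 *.
rewrite /cos_angle_ratio expr_div_n exprMn !sqrtCK -/s -/a.
have -> : a * (`|sform B y x0| ^+ 2 / (s * a)) = `|sform B y x0| ^+ 2 / s.
  by field; rewrite anz gt_eqF.
by rewrite ler_pdivrMr // -yx_x0 mulrC sform_cauchy_schwarz.
Qed.

End PositiveDefinite.

Section Pencil.
Context {C : numClosedFieldType} {n : nat}.
Implicit Types (A M N S : 'M[C]_n) (x : 'cV[C]_n).

Lemma root_pair_charpoly A M t :
  root (pair_charpoly A M) t = (\det (A - t *: M) == 0).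
Proof.
rewrite /root /pair_charpoly -horner_evalE -det_map_mx; congr (\det _ == 0).
by apply/matrixP => i j; rewrite !mxE /= rmorphB rmorphM /= !horner_evalE !hornerE.
Qed.

Lemma posdef_factor N : posdef_mx N -> exists2 R, R \in unitmx & N = adj R *m R.
Proof.
move=> pdN; set P := spectralmx N; set d := spectral_diag N.
have NE : N = adj P *m diag_mx d *m P := hermitian_spectral pdN.1.
have d_gt0 : forall i, 0 < d 0 i.
  by apply: (posdef_congr_diag_gt0 (spectral_unit N)); rewrite -NE.
exists (diag_mx (\row_i sqrtC (d 0 i)) *m P).
  rewrite unitmx_mul spectral_unit andbT unitmxE det_diag unitfE.
  by apply/prodf_neq0 => i _; rewrite mxE sqrtC_eq0 gt_eqF.
rewrite adjmxM adjmx_diag !mulmxA -[adj P *m _ *m _]mulmxA mulmx_diag {1}NE.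
congr (_ *m diag_mx _ *m _); apply/rowP => i; rewrite !mxE.
have sqrt_real : sqrtC (d 0 i) \is Num.real by rewrite ger0_real // sqrtC_ge0 ltW.
by rewrite conj_Creal // -expr2 sqrtCK.
Qed.

(* [S = Q R] where [N = R^* R] and [Q] diagonalises [R^-* M R^-1] unitarily. *)
Lemma simultaneous_diag M N : hermitian_mx M -> posdef_mx N ->
  exists S (e : 'rV[C]_n),
    [/\ S \in unitmx, M = adj S *m diag_mx e *m S & N = adj S *m S].
Proof.
move=> hM /posdef_factor [R Ru NE].
pose K := adj (invmx R) *m M *m invmx R.
have hK : hermitian_mx K by rewrite /hermitian_mx /K !adjmxM adjmxK hM mulmxA.
set Q := spectralmx K; set e := spectral_diag K.
have KE : K = adj Q *m diag_mx e *m Q := hermitian_spectral hK.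
have QQ : adj Q *m Q = 1%:M by apply/unitary_adjmxK/spectral_unitarymx.
exists (Q *m R), e; split.
- by rewrite unitmx_mul spectral_unit.
- rewrite adjmxM -!mulmxA [adj Q *m _]mulmxA [adj Q *m _ *m _]mulmxA -KE.
  rewrite /K !mulmxA -adjmxM mulVmx // adjmx1 mul1mx -mulmxA mulVmx //.
  by rewrite mulmx1.
- by rewrite adjmxM mulmxA -[adj R *m _ *m _]mulmxA QQ mulmx1.
Qed.

Section Diagonalised.
Variables (M N S : 'M[C]_n) (e : 'rV[C]_n).
Hypotheses (Su : S \in unitmx)
  (ME : M = adj S *m diag_mx e *m S) (NE : N = adj S *m S).

Lemma det_pencil_diag t :
  \det (M - t *: N) = (\det S)^* * \prod_i (e 0 i - t) * \det S.
Proof.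
have -> : M - t *: N = adj S *m diag_mx (\row_i (e 0 i - t)) *m S.
  have -> : diag_mx (\row_i (e 0 i - t)) = diag_mx e - t *: 1%:M.
    apply/matrixP => i j; rewrite !mxE.
    by case: eqP => _; rewrite ?mulr1n ?mulr0n ?mulr1 ?mulr0 ?subr0.
  by rewrite ME NE mulmxBr mulmxBl -scalemxAr -scalemxAl mulmx1.
rewrite !det_mulmx det_adjmx det_diag; congr (_ * _ * _).
by apply: eq_bigr => i _; rewrite mxE.
Qed.

Lemma pair_eigenvalue_diag t : pair_eigenvalue M N t <-> exists i, t = e 0 i.
Proof.
have detS_neq0 : \det S != 0 by rewrite -unitfE -unitmxE.
rewrite /pair_eigenvalue root_pair_charpoly det_pencil_diag !mulf_eq0.
rewrite conjC_eq0 (negbTE detS_neq0) orbF /=; split.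
  by case/prodf_eq0 => i _; rewrite subr_eq0 => /eqP <-; exists i.
by case=> i ->; apply/prodf_eq0; exists i; rewrite ?subrr.
Qed.

Lemma pencil_diag_sform_ge mu x : (forall i, mu <= e 0 i) ->
  mu * sform N x x <= sform M x x.
Proof.
move=> mu_le; have -> : N = adj S *m diag_mx (const_mx 1) *m S.
  by rewrite diag_const_mx mulmx1.
rewrite ME !sform_congruence !sform_diag mulr_sumr ler_sum // => i _.
by rewrite mxE mul1r; apply: ler_wpM2r; rewrite ?exprn_ge0.
Qed.

End Diagonalised.

Lemma smallest_pair_eigenvalue_posdef M N mu :
  posdef_mx M -> posdef_mx N -> smallest_pair_eigenvalue M N mu ->
  0 < mu /\ forall x, mu * sform N x x <= sform M x x.
Proof.
move=> pdM pdN [mu_eig mu_min].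
have [S [e [Su ME NE]]] := simultaneous_diag pdM.1 pdN.
have [k mu_ek] := (pair_eigenvalue_diag Su ME NE mu).1 mu_eig.
split; first by rewrite mu_ek; apply: (posdef_congr_diag_gt0 Su); rewrite -ME.
move=> x; apply: (pencil_diag_sform_ge ME NE) => i.
by apply: mu_min; apply/(pair_eigenvalue_diag Su ME NE); exists i.
Qed.

End Pencil.

Section Eigenspace.
Context {C : numClosedFieldType} {n : nat}.
Implicit Types (A M T : 'M[C]_n) (y w : 'cV[C]_n).

Lemma pair_eigenspace_real A M l y : hermitian_mx A -> posdef_mx M ->
  y != 0 -> pair_eigenspace A M l y -> l \is Num.real.
Proof.
move=> hA [hM pM] ynz Ey.
have AyE : sform A y y = l * sform M y y.
  by rewrite /sform -mulmxA Ey -scalemxAr mxE mulmxA.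
have -> : l = sform A y y / sform M y y by rewrite AyE mulfK // gt_eqF ?pM.
by rewrite rpred_div ?sform_real.
Qed.

Lemma hermitian_pencil A M l : hermitian_mx A -> hermitian_mx M ->
  l \is Num.real -> hermitian_mx (A - l *: M).
Proof. by move=> hA hM lr; rewrite /hermitian_mx adjmxB adjmxZ hA hM conj_Creal. Qed.

Lemma pair_eigenspace_orthogonal A M T l y w : hermitian_mx A -> posdef_mx M ->
  T \in unitmx -> pair_eigenspace A M l y ->
  sform (invmx T) y (T *m ((A - l *: M) *m w)) = 0.
Proof.
move=> hA pdM Tu Ey; have [->|ynz] := eqVneq y 0; first by rewrite sform0l.
rewrite sform_invmx_mul //; apply: sform_kerl.
  exact/hermitian_pencil/(pair_eigenspace_real hA pdM ynz Ey)/pdM.1.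
by rewrite mulmxBl -scalemxAl Ey subrr.
Qed.

End Eigenspace.

Section PreconditionedCG.
Context {C : numClosedFieldType} {n : nat}.
Variables (Al T : 'M[C]_n) (x0 : 'cV[C]_n).

Definition cg_range_invariant (s : cg_state C n) : Prop :=
  [/\ exists w, cg_x s - x0 = T *m (Al *m w),
      exists u, cg_p s = T *m (Al *m u)
    & exists v, cg_r s = Al *m v].

Lemma cg_range_invariant_step s :
  cg_range_invariant s -> cg_range_invariant (cg_step Al T s).
Proof.
case=> [[w Ex] [u Ep] [v Er]]; rewrite /cg_step /cg_w /=.
set dl := cg_gamma s / cg_den Al s; set bt := (_ / cg_gamma s).
set v' := v - dl *: (T *m (Al *m u)).
have Er' : cg_r s - dl *: (Al *m cg_p s) = Al *m v'.
  by rewrite Er Ep mulmxBr scalemxAr.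
split; last by exists v'.
- by exists (w + dl *: u); rewrite addrAC Ex Ep !mulmxDr !scalemxAr.
- by exists (v' + bt *: u); rewrite Er' Ep !mulmxDr !scalemxAr.
Qed.

Lemma cg_range_invariant_iter i : cg_range_invariant (cg_iter Al T x0 i).
Proof.
elim: i => [|i IHi]; last exact: cg_range_invariant_step.
split; [exists 0 | exists (- x0) | exists (- x0)];
  by rewrite /= ?subrr ?mulmx0 ?mulmxN.
Qed.

End PreconditionedCG.

Theorem lemma2p3 (C : numClosedFieldType) (n : nat)
  (A M T : 'M[C]_n) (l1 mu1 c : C) (x0 : 'cV[C]_n) :
  hermitian_mx A -> posdef_mx M -> posdef_mx T ->
  smallest_pair_eigenvalue A M l1 ->
  simple_pair_eigenvalue A M l1 ->
  ~ (x0 != 0 /\ pair_eigenspace A M l1 x0) ->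
  ~ (forall y, pair_eigenspace A M l1 y -> sform M y x0 = 0) ->
  smallest_pair_eigenvalue M (invmx T) mu1 ->
  is_cos_angle (invmx T) x0 (pair_eigenspace A M l1) c ->
  forall i : nat, cg_defined (A - l1 *: M) T x0 i ->
    let xi := cg_x (cg_iter (A - l1 *: M) T x0 i) in
    (forall y, pair_eigenspace A M l1 y -> sform (invmx T) y (xi - x0) = 0) /\
    mu1 * sform (invmx T) x0 x0 * c ^+ 2 <= sform M xi xi.
Proof.
(* The range invariant holds whatever the step sizes. *)
move=> hA pdM pdT _ _ _ _ mu1_min [[y [Ey ynz] <-] _] i _ xi.
have orth y' : pair_eigenspace A M l1 y' -> sform (invmx T) y' (xi - x0) = 0.
  have [[w xiE] _ _] := cg_range_invariant_iter (A - l1 *: M) T x0 i.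
  by rewrite /xi xiE; apply: pair_eigenspace_orthogonal; rewrite ?posdef_mx_unit.
split=> //.
have pdTi := posdef_invmx pdT.
have [mu1_gt0 mu1_le] := smallest_pair_eigenvalue_posdef pdM pdTi mu1_min.
apply: le_trans (mu1_le xi); rewrite -mulrA ler_pM2l //.
apply: sqr_cos_angle_ratio_le pdTi ynz _.
by apply/eqP; rewrite -subr_eq0 -sformBr orth.
Qed.
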